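(* Let $m,n,k$ be positive integers with $(m,k-1)=1$ and $n=\mathrm{ind}_m(k)$, let $G=G(m,n,k)=\langle a,b;\ a^m=1,\ b^n=1,\ b^{-1}ab=a^k\rangle$ and let $S\subseteq\mathbb{Z}_m$ be a base. Then $\mathrm{orb}(x,S^* )$ is basic for every $x\in S^*$ if and only if $\Sigma_G(S)$ is complete. In this case $\Sigma_G(S)=\dot{\bigcup}_{x\in S^*}C(x,1)$ (a disjoint union) and $|\Sigma_G(S)|=m\,|S^*|$.
   Context: $\mathrm{ind}_m(k)$ is the least positive integer $d$ with $k^d\equiv 1\pmod m$. Elements of $G$ are written uniquely as $a^ib^j$, $i\in\mathbb{Z}_m$, $j\in\mathbb{Z}_n$; $k_t=k^t-1\pmod m$. Maps are written on the right and composed left to right. For $x,y\in\mathbb{Z}_m$, $\mu(x,y):G\to G$ is $(a^ib^j)\mu(x,y)=a^{xik^j-yk_j}$, and $C(x,y)=\{\mu(x,yz):z\in\mathbb{Z}_m\}$. For $S\subseteq\mathbb{Z}_m$, $I(S)$ is the set of elements of $S$ invertible in $\mathbb{Z}_m$ and $S^*$ is the multiplicative subsemigroup of $\mathbb{Z}_m$ generated by $S$. A base is $S\subseteq \mathbb{Z}_m$ with $0\in S$ and $I(S)\ne\varnothing$. $\Sigma_G(S)$ is the semigroup under composition generated by $\{\mu(s,z):s\in S,z\in\mathbb{Z}_m\}$. For $x\in S^*$, $Y(x)=\{s^*z: s^*\in S^*, z\in\mathbb{Z}_m, \exists s\in S,\ x\equiv ss^*\pmod m\}$, $\mathcal{F}_G(x,S)=\{C(x,y):y\in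 Y(x)\}$; this family is complete if $C(x,1)\in\mathcal{F}_G(x,S)$, and $\Sigma_G(S)$ is complete if every $x$-family ($x\in S^*$) is complete. $\mathrm{orb}(x,S^* )=\{xy:y\in I(S^* )\}$ is basic if it meets $S$. *)

From mathcomp Require Import all_boot zmodp.
From mathcomp Require Import boolp.

Set Implicit Arguments.
Unset Strict Implicit.
Unset Printing Implicit Defensive.

(* Z_m for a positive integer m, represented as 'I_m (m = m.-1.+1 when 0 < m);
   arithmetic is the arithmetic of zmodp (Zp_add, Zp_mul, Zp_opp, inZp, Zp1). *)
Notation Zm m := 'I_(m.-1).+1.

Definition is_ind (m k n : nat) : Prop :=
  0 < n /\ k ^ n = 1 %[mod m] /\ (forall d, 0 < d < n -> k ^ d <> 1 %[mod m]).

(* Elements of G(m,n,k) in normal form a^i b^j, i in Z_m, j in Z_n, encoded (i, j);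
   Z_n is 'I_n.-1.+1, which is 'I_n since n = ind_m(k) > 0. *)
Notation Gel m n := (Zm m * 'I_(n.-1).+1)%type.

Section Maps.
Variables (m n k : nat).

Definition mu (x y : Zm m) (g : Gel m n) : Gel m n :=
  (Zp_add (Zp_mul (Zp_mul x g.1) (inZp (k ^ g.2)))
          (Zp_opp (Zp_mul y (inZp (k ^ g.2 - 1)))), ord0).

Definition muf (x y : Zm m) : {ffun Gel m n -> Gel m n} := [ffun g => mu x y g].

(* composition, maps written on the right: g (f ; h) = h (f g) *)
Definition compR (f h : {ffun Gel m n -> Gel m n}) : {ffun Gel m n -> Gel m n} :=
  [ffun g => h (f g)].

Definition Cset (x y : Zm m) : {set {ffun Gel m n -> Gel m n}} :=
  [set muf x (Zp_mul y z) | z : Zm m].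

Definition unitZ (s : Zm m) : bool := [exists t : Zm m, Zp_mul s t == Zp1].

Definition Iset (S : {set Zm m}) : {set Zm m} := [set s in S | unitZ s].

Definition Sstar (S : {set Zm m}) : {set Zm m} :=
  [set x | `[< exists (s0 : Zm m) (ss : seq (Zm m)),
              [/\ s0 \in S, all (mem S) ss & foldl (fun a b => Zp_mul a b) s0 ss = x] >] ].

Definition is_base (S : {set Zm m}) : Prop :=
  Zp0 \in S /\ Iset S != set0.

Definition gens (S : {set Zm m}) : {set {ffun Gel m n -> Gel m n}} :=
  [set muf s z | s in S, z in [set: Zm m]].

Definition Sigma (S : {set Zm m}) : {set {ffun Gel m n -> Gel m n}} :=
  [set f | `[< exists f0 (fs : seq {ffun Gel m n -> Gel m n}),
              [/\ f0 \in gens S, all (mem (gens S)) fs & foldl compR f0 fs = f] >] ].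

Definition Yset (S : {set Zm m}) (x : Zm m) : {set Zm m} :=
  [set w | [exists t in Sstar S, exists z : Zm m,
              (w == Zp_mul t z) && [exists s in S, x == Zp_mul s t]]].

Definition Fam (S : {set Zm m}) (x : Zm m) : {set {set {ffun Gel m n -> Gel m n}}} :=
  [set Cset x y | y in Yset S x].

Definition family_complete (S : {set Zm m}) (x : Zm m) : Prop :=
  Cset x Zp1 \in Fam S x.

Definition Sigma_complete (S : {set Zm m}) : Prop :=
  forall x, x \in Sstar S -> family_complete S x.

Definition orbS (S : {set Zm m}) (x : Zm m) : {set Zm m} :=
  [set Zp_mul x y | y in Iset (Sstar S)].

Definition basic (S : {set Zm m}) (x : Zm m) : Prop :=
  orbS S x :&: S != set0.

End Maps.

From mathcomp Require Import all_boot zmodp.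
From mathcomp Require Import boolp.
From mathcomp Require Import cyclic zify.

Set Implicit Arguments.
Unset Strict Implicit.
Unset Printing Implicit Defensive.

(* Each mu(x, y) maps G into <a>, on which mu(s, z) acts as a^i |-> a^(s i);
   hence mu(x, y) ; mu(s, z) = mu(s x, s y), and Sigma_G(S) consists of the maps
   mu(s t, t z) with s in S and t an empty or nonempty product of elements of S.
   Evaluating at a and at b shows that mu(x, y) determines x and, k - 1 being a
   unit mod m, also y; so the C(x, 1) are pairwise disjoint of size m, and
   C(x, y) = C(x, 1) exactly when y is a unit.  The inverse of a unit t of S^{*}
   is a power of t, so it lies in S^{*}; hence the x-family is complete iff x u
   lies in S for some unit u of S^{*}, i.e. iff orb(x, S^{*}) is basic. *)

Section ZpMul.
Variable p : nat.
Local Notation T := 'I_p.+1.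

Lemma inZp0 : inZp 0 = Zp0 :> T.
Proof. by apply: val_inj; rewrite /= mod0n. Qed.

Lemma Zp_mulz0 (x : T) : Zp_mul x Zp0 = Zp0.
Proof. by apply: val_inj; rewrite /= muln0 mod0n. Qed.

Lemma Zp_mulzN (x y : T) : Zp_mul x (Zp_opp y) = Zp_opp (Zp_mul x y).
Proof.
apply/eqP; rewrite -Algebra.addr_eq0 -[X in X == _]/(Zp_add _ _).
by rewrite -Zp_mul_addr [Zp_add _ _]Zp_addNz Zp_mulz0.
Qed.

Lemma Zp_subz0 (x : T) : Zp_add x (Zp_opp Zp0) = x.
Proof. by apply: val_inj; rewrite /= subn0 modnn addn0 modn_small. Qed.

Variable A : {set T}.
Hypothesis mulA : {in A &, forall x y, Zp_mul x y \in A}.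

Lemma mem_inZp_expS (t : T) j : t \in A -> inZp (t ^ j.+1) \in A.
Proof.
move=> At; elim: j => [|j IHj]; first by rewrite expn1 valZpK.
have -> : inZp (t ^ j.+2) = Zp_mul t (inZp (t ^ j.+1)) :> T.
  by apply: val_inj; rewrite /= modnMmr expnS.
exact: mulA.
Qed.

(* The inverse is taken to be t ^ (2 phi - 1): t ^ (phi - 1) may be t ^ 0, not in A. *)
Lemma unit_inv_mem (t v : T) : t \in A -> Zp_mul t v = Zp1 ->
  exists2 u, u \in A & Zp_mul t u = Zp1.
Proof.
move=> At tv1.
have ct : coprime t p.+1.
  by rewrite coprime_sym; apply: (@Zp_intro_unit _ t v); rewrite Zp_mulC.
have phi_gt0 : 0 < totient p.+1 by rewrite totient_gt0.
have phi2 : (totient p.+1 * 2 - 2).+2 = totient p.+1 * 2 by lia.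
exists (inZp (t ^ (totient p.+1 * 2 - 2).+1)); first exact: mem_inZp_expS.
apply: val_inj; rewrite /= modnMmr -expnS phi2.
by rewrite expnM -modnXm Euler_exp_totient // modnXm exp1n.
Qed.

End ZpMul.

Section SemigroupGeneratedBy.
Variables (m : nat) (S : {set Zm m}).

Lemma SstarP x :
  reflect (exists s0 ss, [/\ s0 \in S, all (mem S) ss & foldl (@Zp_mul _) s0 ss = x])
          (x \in Sstar S).
Proof. by rewrite inE; apply: asboolP. Qed.

Lemma foldl_Zp_mulA (x y : Zm m) ss :
  foldl (@Zp_mul _) (Zp_mul x y) ss = Zp_mul x (foldl (@Zp_mul _) y ss).
Proof. by elim: ss y => [//|s ss IHss] y /=; rewrite -Zp_mulA IHss. Qed.

Lemma Sstar_subset : S \subset Sstar S.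
Proof. by apply/subsetP => s Ss; apply/SstarP; exists s, [::]. Qed.

Lemma Sstar_mul : {in Sstar S &, forall x y, Zp_mul x y \in Sstar S}.
Proof.
move=> _ _ /SstarP [s0 [ss [Ss0 Sss <-]]] /SstarP [t0 [ts [St0 Sts <-]]].
apply/SstarP; exists s0, (ss ++ t0 :: ts); split => //.
  by rewrite all_cat Sss /= St0.
by rewrite foldl_cat /= foldl_Zp_mulA.
Qed.

Lemma Sstar_unit_inv t v : t \in Sstar S -> Zp_mul t v = Zp1 ->
  exists2 u, u \in Sstar S & Zp_mul t u = Zp1.
Proof. exact/unit_inv_mem/Sstar_mul. Qed.

End SemigroupGeneratedBy.

Lemma ind_gt1 m k n : 1 < m -> 0 < k -> coprime m (k - 1) -> is_ind m k n -> 1 < n.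
Proof.
move=> m_gt1 k_gt0 cop [n_gt0 [kn1 _]]; case: n n_gt0 kn1 => [|[|//]] //= _.
rewrite expn1 => /eqP; rewrite eqn_mod_dvd // => /coprime_dvdr/(_ cop).
by rewrite /coprime gcdnn => /eqP m1; rewrite m1 in m_gt1.
Qed.

Section MuMaps.
Variables m n k : nat.
Local Notation T := (Zm m).
Local Notation muf := (muf n k).
Local Notation Cset := (Cset n k).

Lemma muf_ord0 (x y i : T) : muf x y (i, ord0) = (Zp_mul x i, ord0).
Proof.
by rewrite ffunE /mu /= expn0 subnn -[inZp 1]/Zp1 inZp0 Zp_mulz1 Zp_mulz0 Zp_subz0.
Qed.

Lemma muf_comp (x y s z : T) :
  compR (muf x y) (muf s z) = muf (Zp_mul s x) (Zp_mul s y).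
Proof.
apply/ffunP => g; rewrite ffunE.
have -> : muf x y g = ((mu k x y g).1, ord0) by rewrite ffunE.
by rewrite muf_ord0 ffunE /= Zp_mul_addr Zp_mulzN !Zp_mulA.
Qed.

Lemma muf_at_a (x y : T) : muf x y (Zp1, ord0) = (x, ord0).
Proof. by rewrite muf_ord0 Zp_mulz1. Qed.

Lemma muf_injl (x y a b : T) : muf x a = muf y b -> x = y.
Proof. by move=> xa_yb; have := muf_at_a x a; rewrite xa_yb muf_at_a => -[]. Qed.

Lemma muf_injr :
  0 < k -> coprime m (k - 1) -> is_ind m k n -> forall x : T, injective (muf x).
Proof.
move=> k_gt0 cop ind x y z xy_xz.
have [m_le1 | m_gt1] := leqP m 1.
  have T_le1 : m.-1.+1 <= 1 by case: (m) m_le1 => [|[]].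
  have val0 (c : T) : val c = 0 by apply/eqP; rewrite -leqn0 -ltnS (leq_trans (ltn_ord c)).
  by apply: val_inj; rewrite !val0.
have n_gt1 := ind_gt1 m_gt1 k_gt0 cop ind.
have j1 : 1 < n.-1.+1 by rewrite prednK // ltnW.
(* At b, mu(x, y) takes the value a^(- y (k - 1)). *)
have := congr1 (fun f : {ffun _} => (f (Zp0, inord 1)).1) xy_xz.
rewrite !ffunE /mu /= inordK // expn1 => /Algebra.addrI /Algebra.oppr_inj yK_zK.
have unitK : coprime m.-1.+1 (inZp (k - 1) : T).
  by rewrite /= coprime_modr prednK // ltnW.
by rewrite -[y]Zp_mulz1 -[z]Zp_mulz1 -(Zp_mulzV unitK) !Zp_mulA yK_zK.
Qed.

Lemma mem_Cset1 (x z : T) : muf x z \in Cset x Zp1.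
Proof. by apply/imsetP; exists z; rewrite ?Zp_mul1z. Qed.

Lemma Cset_unit (x y v : T) : Zp_mul y v = Zp1 -> Cset x y = Cset x Zp1.
Proof.
move=> yv1; apply/setP => f; apply/imsetP/imsetP => -[z _ ->].
  by exists (Zp_mul y z); rewrite ?Zp_mul1z.
by exists (Zp_mul v z); rewrite // Zp_mulA yv1.
Qed.

Lemma Cset_disjoint (x y a b : T) : x != y -> [disjoint Cset x a & Cset y b].
Proof.
move=> xy; rewrite -setI_eq0; apply/eqP/setP => f; rewrite !inE.
apply/andP => -[/imsetP [z _ ->] /imsetP [w _ /muf_injl x_eq_y]].
by rewrite x_eq_y eqxx in xy.
Qed.

Lemma foldl_compR_muf (x y z : T) us :
  foldl (@compR m n) (muf x y) [seq muf u z | u <- us] =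
  muf (foldl (@Zp_mul _) x us) (foldl (@Zp_mul _) y us).
Proof.
by elim: us x y => [//|u us IHus] x y /=; rewrite muf_comp IHus !(Zp_mulC u).
Qed.

Variable S : {set T}.

Lemma Sigma_subset : Sigma n k S \subset \bigcup_(x in Sstar S) Cset x Zp1.
Proof.
apply/subsetP => f; rewrite inE => /asboolP [f0 [fs [/imset2P [s z Ss _ ->] Sfs <-]]].
have : s \in Sstar S by rewrite (subsetP (Sstar_subset S)).
elim: fs s z Sfs {Ss} => [|g fs IHfs] x y /= => [_ Sx|].
  by apply/bigcupP; exists x; rewrite ?mem_Cset1.
case/andP => /imset2P [s z Ss _ ->] Sfs Sx; rewrite muf_comp; apply: IHfs => //.
by apply: Sstar_mul => //; apply: (subsetP (Sstar_subset S)).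
Qed.

Lemma Cset_sub_Sigma (x y : T) : y \in Yset S x -> Cset x y \subset Sigma n k S.
Proof.
rewrite inE => /existsP [t /andP [St /existsP [z /andP [/eqP -> /existsP [s /andP [Ss /eqP ->]]]]]].
case/SstarP: St => t0 [ts [St0 Sts <-]].
apply/subsetP => _ /imsetP [w _ ->]; rewrite inE; apply/asboolP.
exists (muf s (Zp_mul z w)), [seq muf u Zp0 | u <- t0 :: ts]; split.
- by apply/imset2P; exists s (Zp_mul z w); rewrite ?inE.
- rewrite all_map; apply/allP => u tsu /=; apply/imset2P; exists u Zp0; rewrite ?inE //.
  by move: tsu; rewrite inE => /predU1P [->|/(allP Sts)].
- rewrite foldl_compR_muf /= !foldl_Zp_mulA; congr muf.
  by rewrite [LHS]Zp_mulC Zp_mulA.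
Qed.

Lemma Sigma_completeE :
  Sigma_complete n k S -> Sigma n k S = \bigcup_(x in Sstar S) Cset x Zp1.
Proof.
move=> complete; apply/eqP; rewrite eqEsubset Sigma_subset /=.
apply/bigcupsP => x /complete /imsetP [y Yy ->]; exact: Cset_sub_Sigma.
Qed.

End MuMaps.

Section Completeness.
Variables m n k : nat.
Local Notation T := (Zm m).
Local Notation muf := (muf n k).
Local Notation Cset := (Cset n k).
Hypothesis muf_inj : forall x : T, injective (muf x).

Lemma Cset_eq1_unit (x y : T) : Cset x y = Cset x Zp1 -> exists v, Zp_mul y v = Zp1.
Proof.
move=> Cxy_Cx1; have : muf x Zp1 \in Cset x y by rewrite Cxy_Cx1 mem_Cset1.
by case/imsetP => v _ /muf_inj yv1; exists v.
Qed.

Lemma basic_complete (S : {set T}) x :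
  x \in Sstar S -> basic S x <-> family_complete n k S x.
Proof.
move=> Sx; split.
  case/set0Pn => e; rewrite inE => /andP [/imsetP [u + ->] Sxu].
  rewrite inE => /andP [Su /existsP [v /eqP uv1]].
  have [u' Su' uu'1] := Sstar_unit_inv Su uv1.
  have u'u1 : Zp_mul u' u = Zp1 by rewrite Zp_mulC.
  apply/imsetP; exists u'; last by rewrite (Cset_unit n k x u'u1).
  rewrite inE; apply/existsP; exists u'; rewrite Su' /=.
  apply/existsP; exists Zp1; rewrite Zp_mulz1 eqxx /=.
  by apply/existsP; exists (Zp_mul x u); rewrite Sxu -Zp_mulA uu'1 Zp_mulz1 /=.
case/imsetP => y; rewrite inE => /existsP [t /andP [St Yy]] /esym /Cset_eq1_unit [v].
case/existsP: Yy => z /andP [/eqP -> /existsP [s /andP [Ss /eqP ->]]].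
rewrite -Zp_mulA => /(Sstar_unit_inv St) [u Su tu1].
apply/set0Pn; exists s; rewrite inE Ss andbT; apply/imsetP; exists u.
  by rewrite inE Su; apply/existsP; exists t; rewrite Zp_mulC tu1.
by rewrite -Zp_mulA tu1 Zp_mulz1.
Qed.

Lemma card_bigcup_Cset1 (A : {set T}) : 0 < m ->
  #|\bigcup_(x in A) Cset x Zp1| = m * #|A|.
Proof.
move=> m_gt0; have -> : \bigcup_(x in A) Cset x Zp1 = muf @2: (A, [set: T]).
  rewrite curry_imset2l; apply: eq_bigr => x _.
  by apply/setP => f; apply/imsetP/imsetP => -[z _ ->]; exists z; rewrite ?Zp_mul1z.
rewrite curry_imset2X card_imset.
  by rewrite cardsX cardsT card_ord mulnC; congr (_ * _); exact: prednK.
move=> [x a] [y b] /= xa_yb; have x_eq_y := muf_injl xa_yb; subst y.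
by rewrite (muf_inj xa_yb).
Qed.

End Completeness.

Theorem theorem4p11 (m n k : nat) (S : {set Zm m}) :
  0 < m -> 0 < k -> coprime m (k - 1) -> is_ind m k n ->
  is_base S ->
  ((forall x, x \in Sstar S -> basic S x) <-> Sigma_complete n k S) /\
  (Sigma_complete n k S ->
     [/\ Sigma n k S = \bigcup_(x in Sstar S) Cset n k x Zp1,
         (forall x y, x \in Sstar S -> y \in Sstar S -> x != y ->
            [disjoint Cset n k x Zp1 & Cset n k y Zp1])
       & #|Sigma n k S| = m * #|Sstar S| ]).
Proof.
move=> m_gt0 k_gt0 cop ind _.
have muf_inj := muf_injr k_gt0 cop ind.
split.
  by split=> basic_all x Sx; apply/(basic_complete muf_inj Sx)/basic_all.
move=> complete; rewrite Sigma_completeE // card_bigcup_Cset1 //.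
by split=> // x y _ _; apply: Cset_disjoint.
Qed.
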